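(* The Banach lattice $\ell_2$ (with coordinatewise order) contains a basis $(u_i)$ which is isometrically equivalent to the canonical basis $(e_i)$ of $\ell_2$ (i.e. $(u_i)$ is an orthonormal basis) and which is neither bibasic nor uniformly quasi-greedy.
   Context: A sequence $(x_k)$ of nonzero vectors in a Banach lattice is bibasic if there is $M\ge1$ with $\|\bigvee_{n=1}^m|\sum_{k=1}^na_kx_k|\|\le M\|\sum_{k=1}^ma_kx_k\|$ for all $m$ and scalars $a_k$. A semi-normalized basic sequence $(x_k)$ with span $E$ and biorthogonal functionals $x_k^*$ is uniformly quasi-greedy if $\sup_m\sup_{x\in E,\|x\|=1}\|\bigvee_{n=1}^m|\mathcal{G}_n(x)|\|<\infty$, where $\mathcal{G}_n(x)=\sum_{j=1}^n x^*_{\rho(j)}(x)x_{\rho(j)}$ and $\rho$ is the natural greedy ordering of $x$ (indices listed by non-increasing $|x_k^*(x)|$, ties broken by increasing index). *)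

From Stdlib Require Import Reals List.
From Coquelicot Require Import Coquelicot.
Open Scope R_scope.

(* vectors are real sequences nat -> R; indices start at 0 *)
Definition vec := nat -> R.

Definition in_l2 (x : vec) : Prop := ex_series (fun k => (x k) ^ 2).
Definition l2norm (x : vec) : R := sqrt (Series (fun k => (x k) ^ 2)).
Definition vsub (x y : vec) : vec := fun k => x k - y k.

Definition canon (i : nat) : vec := fun j => if Nat.eqb i j then 1 else 0.

Fixpoint lin_comb (u : nat -> vec) (a : nat -> R) (n : nat) : vec :=
  match n with
  | O => fun _ => 0
  | S n' => fun j => lin_comb u a n' j + a n' * u n' j
  end.

Definition list_comb (u : nat -> vec) (a : nat -> R) (A : list nat) : vec :=
  fun j => fold_right (fun k acc => a k * u k j + acc) 0 A.

(* coordinatewise lattice supremum  \/_{n=1}^m |f n|  (0 for m = 0) *)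
Fixpoint sup_abs (f : nat -> vec) (m : nat) : vec :=
  match m with
  | O => fun _ => 0
  | S m' => fun j => Rmax (sup_abs f m' j) (Rabs (f (S m') j))
  end.

Definition expands (u : nat -> vec) (a : nat -> R) (x : vec) : Prop :=
  is_lim_seq (fun n => l2norm (vsub (lin_comb u a n) x)) 0.

Definition is_basis (u : nat -> vec) : Prop :=
  (forall i, in_l2 (u i)) /\
  forall x, in_l2 x ->
    exists a, expands u a x /\
      forall b, expands u b x -> forall k, b k = a k.

Definition isometric_to_canon (u : nat -> vec) : Prop :=
  forall (a : nat -> R) (n : nat),
    l2norm (lin_comb u a n) = l2norm (lin_comb canon a n).

(* bibasic (with 0-based indexing: partial sums of the first n terms, n = 1..m) *)
Definition bibasic (u : nat -> vec) : Prop :=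
  exists M, 1 <= M /\
    forall (m : nat) (a : nat -> R),
      l2norm (sup_abs (lin_comb u a) m) <= M * l2norm (lin_comb u a m).

(* A is the set of the first n indices in the natural greedy ordering of the
   coefficient sequence a (non-increasing |a_k|, ties broken by increasing index) *)
Definition greedy_set (a : nat -> R) (n : nat) (A : list nat) : Prop :=
  NoDup A /\ length A = n /\
  forall i j, In i A -> ~ In j A ->
    Rabs (a j) < Rabs (a i) \/ (Rabs (a j) = Rabs (a i) /\ (i < j)%nat).

(* uniformly quasi-greedy: x ranges over the (closed) span E of u, with
   coefficients a = (x_k^*(x))_k; G_n(x) = list_comb u a (A n) *)
Definition uniformly_quasi_greedy (u : nat -> vec) : Prop :=
  exists K, forall (m : nat) (x : vec) (a : nat -> R) (A : nat -> list nat),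
    in_l2 x -> expands u a x -> l2norm x = 1 ->
    (forall n, (1 <= n <= m)%nat -> greedy_set a n (A n)) ->
    l2norm (sup_abs (fun n => list_comb u a (A n)) m) <= K.

(* Cut the indices into the blocks [b^2, (b+1)^2) of odd length N = 2b+1 and on each
   block take the normalized Toeplitz matrix (F (PI (j - i + 1/2) / N))_(i,j), where
   F y = sin (N y) / sin y.  Along the nodes PI (t + 1/2) / N the product
   sin (N x) sin (N y) is constant and sin (y - x) F x F y is proportional to
   cot x - cot y, so the Gram sums of the block are differences of cyclic cotangent
   sums, which vanish: the matrix is orthogonal and the block-diagonal system is an
   orthonormal basis of l_2.  Its entries are those of a discrete Hilbert transform,
   of size about 1/(|j - i| + 1/2) after normalization by sqrt N.  Hence for the
   vector with coefficients (-1)^t / sqrt N on block b, of norm 1, the t-th partial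
   sum at coordinate b^2 + t is at least of order (log t) / sqrt N, and the maximal
   function of the partial sums has norm of order log b.  All these coefficients
   have the same modulus, so the greedy sums are the partial sums, and uniform
   quasi-greediness fails as well. *)

From Stdlib Require Import Reals List Lra Lia Psatz.
From Coquelicot Require Import Coquelicot.
From mathcomp Require Import ssreflect ssrfun ssrbool eqtype ssrnat seq bigop.
From mathcomp Require Import Rstruct zify.
Open Scope R_scope.

Local Notation "\sum_ ( m <= i < n ) F" := (\big[Rplus/0]_(m <= i < n) F) : R_scope.

(** * Sums, series and the blocks of squares *)

Lemma big_Rminus m n (F G : nat -> R) :
  \sum_(m <= i < n) (F i - G i) = \sum_(m <= i < n) F i - \sum_(m <= i < n) G i.
Proof.
rewrite (eq_bigr (fun i => F i + (-1) * G i)); last by move=> i _; ring.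
rewrite big_split /= -big_distrr /=; ring.
Qed.

Lemma sum_nat_recr m n (F : nat -> R) : (m <= n)%N ->
  \sum_(m <= i < n.+1) F i = \sum_(m <= i < n) F i + F n.
Proof. exact: big_nat_recr. Qed.

Lemma sum_nat_split m n (F G : nat -> R) :
  \sum_(m <= i < n) (F i + G i) = \sum_(m <= i < n) F i + \sum_(m <= i < n) G i.
Proof. exact: big_split. Qed.

Lemma sum_nat_cat m n p (F : nat -> R) : (m <= n)%N -> (n <= p)%N ->
  \sum_(m <= i < p) F i = \sum_(m <= i < n) F i + \sum_(n <= i < p) F i.
Proof. exact: big_cat_nat. Qed.

Lemma sum_ge0 m n (F : nat -> R) : (forall i, 0 <= F i) -> 0 <= \sum_(m <= i < n) F i.
Proof. by move=> H; apply: (big_ind (fun x => 0 <= x)) => // [|x y]; lra. Qed.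

Lemma ler_sum_nat m n (F G : nat -> R) : (forall i, (m <= i < n)%N -> F i <= G i) ->
  \sum_(m <= i < n) F i <= \sum_(m <= i < n) G i.
Proof.
move=> H; rewrite big_nat_cond [X in _ <= X]big_nat_cond.
apply: (big_ind2 (fun x y => x <= y)) => [|x1 x2 y1 y2|i /andP [Hi _]]; [lra|lra|exact: H].
Qed.

Lemma sum_const_nat m n c : (m <= n)%N -> \sum_(m <= i < n) c = INR (n - m) * c.
Proof.
elim: n => [|n IH] Hmn.
  by rewrite (_ : m = 0%N) ?big_geq //=; [ring | lia].
case: (leqP m n) => Hm.
  2: by rewrite (_ : m = n.+1) ?big_geq ?subnn //=; [ring | lia].
rewrite sum_nat_recr // IH // (_ : (n.+1 - m = (n - m).+1)%N); last by lia.
rewrite S_INR; ring.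
Qed.

Lemma sum_kronecker m n (f : nat -> R) k : (m <= k < n)%N ->
  \sum_(m <= i < n) (f i * (if Nat.eqb k i then 1 else 0)) = f k.
Proof.
move=> /andP [Hmk Hkn].
have Hoff i : (i < k)%N || (k < i)%N -> f i * (if Nat.eqb k i then 1 else 0) = 0.
  by move=> Hi; rewrite (_ : Nat.eqb k i = false) ?Rmult_0_r //; apply/Nat.eqb_neq; lia.
rewrite (sum_nat_cat _ k) //; last by lia.
rewrite (big_ltn Hkn) Nat.eqb_refl big_nat_cond big1; last first.
  by move=> i /andP [/andP [_ Hi] _]; apply: Hoff; rewrite Hi.
rewrite big_nat_cond big1; first ring.
by move=> i /andP [/andP [Hi _] _]; apply: Hoff; rewrite Hi orbT.
Qed.

Lemma sum_sq_orthonormal_comb m n (w : nat -> nat -> R) (z : nat -> R) :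
  (forall i i', (m <= i < n)%N -> (m <= i' < n)%N ->
     \sum_(m <= j < n) (w i j * w i' j) = if Nat.eqb i i' then 1 else 0) ->
  \sum_(m <= j < n) (\sum_(m <= i < n) (z i * w i j)) ^ 2 = \sum_(m <= i < n) z i ^ 2.
Proof.
move=> Hw.
have Esq j : (\sum_(m <= i < n) (z i * w i j)) ^ 2 =
    \sum_(m <= i < n) \sum_(m <= i' < n) (z i * z i' * (w i j * w i' j)).
  rewrite /= Rmult_1_r big_distrl /=; apply: eq_bigr => i _.
  by rewrite big_distrr /=; apply: eq_bigr => i' _; ring.
rewrite (eq_bigr _ (fun j _ => Esq j)) exchange_big_nat /=.
apply: eq_big_nat => i Hi; rewrite exchange_big_nat /=.
rewrite (eq_big_nat _ _ (F2 := fun i' => z i * z i' * (if Nat.eqb i i' then 1 else 0))).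
  by rewrite (sum_kronecker _ _ (fun i' => z i * z i')) //= Rmult_1_r.
by move=> i' Hi'; rewrite -big_distrr /= Hw.
Qed.

Lemma orthonormal_comb_coord m n (w : nat -> nat -> R) (z : nat -> R) j :
  (forall j j', (m <= j < n)%N -> (m <= j' < n)%N ->
     \sum_(m <= i < n) (w i j * w i j') = if Nat.eqb j j' then 1 else 0) ->
  (m <= j < n)%N ->
  \sum_(m <= i < n) ((\sum_(m <= j' < n) (z j' * w i j')) * w i j) = z j.
Proof.
move=> Hw Hj.
rewrite (eq_bigr (fun i => \sum_(m <= j' < n) (z j' * (w i j' * w i j)))); last first.
  by move=> i _; rewrite big_distrl /=; apply: eq_bigr => j' _; ring.
rewrite exchange_big_nat /=.
rewrite (eq_big_nat _ _ (F2 := fun j' => z j' * (if Nat.eqb j j' then 1 else 0))).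
  exact: sum_kronecker.
move=> j' Hj'; rewrite -big_distrr /= Hw //.
by case: (Nat.eqb_spec j' j); case: (Nat.eqb_spec j j') => //; lia.
Qed.

Definition psum (p : nat -> R) (n : nat) : R := \sum_(0 <= j < n) p j.

Lemma psum0 p : psum p 0 = 0.
Proof. by rewrite /psum big_geq. Qed.

Lemma psumS p n : psum p n.+1 = psum p n + p n.
Proof. exact: sum_nat_recr. Qed.

Lemma psum_ext p q n : (forall j, (j < n)%N -> p j = q j) -> psum p n = psum q n.
Proof. by move=> H; apply: eq_big_nat => j /andP [_ Hj]; exact: H. Qed.

Lemma psum_ge0 p n : (forall j, 0 <= p j) -> 0 <= psum p n.
Proof. exact: sum_ge0. Qed.

Lemma psum_monotone p m n : (forall j, 0 <= p j) -> (m <= n)%N -> psum p m <= psum p n.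
Proof.
move=> Hp Hmn; rewrite /psum [X in _ <= X](sum_nat_cat _ m) //.
by have := sum_ge0 m n p Hp; lra.
Qed.

Lemma is_series_psum p l : is_series p l <-> is_lim_seq (psum p) l.
Proof.
have E n : sum_n p n = psum p n.+1.
  elim: n => [|n IH]; first by rewrite sum_O psumS psum0 Rplus_0_l.
  by rewrite sum_Sn psumS -IH.
rewrite (is_lim_seq_incr_1 (psum p)); split => H.
- exact: (is_lim_seq_ext (sum_n p) _ _ E).
- have Hs : is_lim_seq (sum_n p) l := is_lim_seq_ext _ _ _ (fun n => esym (E n)) H.
  exact: Hs.
Qed.

Lemma is_series_finite_support p L : (forall j, (L <= j)%N -> p j = 0) ->
  is_series p (psum p L).
Proof.
move=> H; apply/is_series_psum.
apply: (is_lim_seq_ext_loc (fun _ => psum p L)); last exact: is_lim_seq_const.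
exists L => n /leP Hn.
rewrite /psum [RHS](sum_nat_cat _ L) // [X in _ = _ + X]big_nat_cond.
rewrite [X in _ = _ + X]big1 ?Rplus_0_r // => j /andP [/andP [Hj _] _]; exact: H.
Qed.

Lemma Series_ge_term p k : (forall j, 0 <= p j) -> ex_series p -> p k <= Series p.
Proof.
move=> Hp [l Hl]; rewrite (is_series_unique _ _ Hl).
have Hev : eventually (fun n => p k <= psum p n).
  exists k.+1 => n /leP Hn; apply: Rle_trans (psum_monotone p _ _ Hp Hn).
  by rewrite psumS; have := psum_ge0 p k Hp; lra.
exact: (is_lim_seq_le_loc _ _ (p k) l Hev (is_lim_seq_const _) (proj1 (is_series_psum _ _) Hl)).
Qed.

Definition sq (b : nat) : nat := (b * b)%N.

Lemma sq_succ b : sq b.+1 = (sq b + (2 * b + 1))%N.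
Proof. rewrite /sq; nia. Qed.

(** Squeeze the partial sums between consecutive squares. *)
Lemma is_series_eq_psum_sq p q l :
  (forall j, 0 <= p j) -> (forall j, 0 <= q j) ->
  (forall b, psum p (sq b) = psum q (sq b)) ->
  is_series p l -> is_series q l.
Proof.
move=> Hp Hq Hb /is_series_psum Hl; apply/is_series_psum.
have sq_sqrt_to_oo (f : nat -> nat) : (forall n, Nat.sqrt n <= f n)%coq_nat ->
    filterlim (fun n => sq (f n)) eventually eventually.
  move=> Hf P [N HN]; exists (N * N)%coq_nat => n Hn; apply: HN.
  have HN' : (N <= Nat.sqrt n)%coq_nat by rewrite -[N]Nat.sqrt_square; exact: Nat.sqrt_le_mono.
  have := Hf n; rewrite /sq; clear -HN'; nia.
apply: (is_lim_seq_le_le (fun n => psum p (sq (Nat.sqrt n))) _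
          (fun n => psum p (sq (Nat.sqrt n).+1))).
- move=> n; have [H1 H2] := Nat.sqrt_spec n (Nat.le_0_l n).
  by rewrite !Hb; split; apply: psum_monotone => //; apply/leP; rewrite /sq; lia.
- exact: (is_lim_seq_subseq _ _ _ (sq_sqrt_to_oo _ (fun n => le_n _)) Hl).
- exact: (is_lim_seq_subseq _ _ _ (sq_sqrt_to_oo _ (fun n => le_S _ _ (le_n _))) Hl).
Qed.

Definition block_of (i : nat) : nat := Nat.sqrt i.

Lemma block_of_in b i : (sq b <= i < sq b.+1)%N -> block_of i = b.
Proof. by move=> /andP [/leP H1 /leP H2]; apply: Nat.sqrt_unique. Qed.

Lemma block_of_spec i : (sq (block_of i) <= i < sq (block_of i).+1)%N.
Proof.
have [/leP H1 /leP H2] := Nat.sqrt_spec i (Nat.le_0_l i).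
by rewrite /sq /block_of H1 H2.
Qed.

Lemma block_of_ge b j : (sq b <= j)%N -> (b <= block_of j)%N.
Proof.
move=> /leP H; apply/leP; rewrite -[b]Nat.sqrt_square; exact: Nat.sqrt_le_mono.
Qed.

Lemma in_block b t : (t < 2 * b + 1)%N -> (sq b <= t + sq b < sq b.+1)%N.
Proof. by rewrite sq_succ => H; apply/andP; split; lia. Qed.

Lemma sum_block_shift b (F : nat -> R) :
  \sum_(sq b <= j < sq b.+1) F j = \sum_(0 <= t < 2 * b + 1) F (t + sq b)%N.
Proof. by rewrite -{1}(add0n (sq b)) big_addn sq_succ addKn. Qed.

Lemma psum_sq_blocks (f g : nat -> R) :
  (forall b, \sum_(sq b <= j < sq b.+1) f j = \sum_(sq b <= j < sq b.+1) g j) ->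
  forall b, psum f (sq b) = psum g (sq b).
Proof.
move=> H; elim=> [|b IH]; first by rewrite !psum0.
have Hb : (sq b <= sq b.+1)%N by rewrite sq_succ leq_addr.
rewrite /psum (sum_nat_cat _ (sq b)) // [RHS](sum_nat_cat _ (sq b)) //.
by rewrite -/(psum f _) -/(psum g _) IH H.
Qed.

(** * Block-diagonal orthogonal systems *)

Definition block_orthogonal (u : nat -> vec) : Prop :=
  (forall i j, block_of i <> block_of j -> u i j = 0) /\
  (forall b i i', (sq b <= i < sq b.+1)%N -> (sq b <= i' < sq b.+1)%N ->
     \sum_(sq b <= j < sq b.+1) (u i j * u i' j) = if Nat.eqb i i' then 1 else 0) /\
  (forall b j j', (sq b <= j < sq b.+1)%N -> (sq b <= j' < sq b.+1)%N ->
     \sum_(sq b <= i < sq b.+1) (u i j * u i j') = if Nat.eqb j j' then 1 else 0).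

Definition trunc (a : nat -> R) (n : nat) : vec := fun i => if Nat.ltb i n then a i else 0.

Lemma lin_comb_canon a n j : lin_comb canon a n j = trunc a n j.
Proof.
rewrite /trunc; elim: n => [|n IH] /=; first by case: (Nat.ltb_spec j 0) => //; lia.
rewrite IH /canon.
by case: (Nat.ltb_spec j n); case: (Nat.ltb_spec j n.+1); case: (Nat.eqb_spec n j);
  move=> *; try lia; subst; ring.
Qed.

Lemma is_series_trunc_sq a n :
  is_series (fun i => trunc a n i ^ 2) (psum (fun i => trunc a n i ^ 2) n).
Proof.
apply: is_series_finite_support => j Hj; rewrite /trunc.
by case: (Nat.ltb_spec j n) => H; [lia | ring].
Qed.

Section BlockOrthogonal.

Variable u : nat -> vec.
Hypothesis Hu : block_orthogonal u.

Definition synth (z : vec) : vec :=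
  fun j => \sum_(sq (block_of j) <= i < sq (block_of j).+1) (z i * u i j).

Definition analysis (z : vec) : vec :=
  fun i => \sum_(sq (block_of i) <= j < sq (block_of i).+1) (z j * u i j).

Lemma synth_block z b j : (sq b <= j < sq b.+1)%N ->
  synth z j = \sum_(sq b <= i < sq b.+1) (z i * u i j).
Proof. by move=> H; rewrite /synth (block_of_in _ _ H). Qed.

Lemma analysis_block z b i : (sq b <= i < sq b.+1)%N ->
  analysis z i = \sum_(sq b <= j < sq b.+1) (z j * u i j).
Proof. by move=> H; rewrite /analysis (block_of_in _ _ H). Qed.

Lemma synth_sub x y j : synth (vsub x y) j = synth x j - synth y j.
Proof. by rewrite /synth /vsub -big_Rminus; apply: eq_bigr => i _; ring. Qed.

Lemma synth_analysis z j : synth (analysis z) j = z j.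
Proof.
have [_ [_ Hcol]] := Hu.
rewrite /synth (eq_big_nat _ _ (F2 := fun i =>
   (\sum_(sq (block_of j) <= j' < sq (block_of j).+1) (z j' * u i j')) * u i j)).
  by apply: orthonormal_comb_coord (block_of_spec j) => j1 j2; apply: Hcol.
by move=> i Hi; rewrite (analysis_block _ _ _ Hi).
Qed.

Lemma is_series_sq_synth z l :
  is_series (fun i => z i ^ 2) l <-> is_series (fun j => synth z j ^ 2) l.
Proof.
have [_ [Hrow _]] := Hu.
have E : forall b, psum (fun j => synth z j ^ 2) (sq b) = psum (fun i => z i ^ 2) (sq b).
  apply: psum_sq_blocks => b.
  rewrite (eq_big_nat _ _ (F2 := fun j => (\sum_(sq b <= i < sq b.+1) (z i * u i j)) ^ 2)).
    by apply: sum_sq_orthonormal_comb => i i'; apply: Hrow.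
  by move=> j Hj; rewrite (synth_block _ _ _ Hj).
by split; apply: is_series_eq_psum_sq => *; rewrite ?E //; apply: pow2_ge_0.
Qed.

Lemma is_series_sq_analysis z l :
  is_series (fun j => z j ^ 2) l -> is_series (fun i => analysis z i ^ 2) l.
Proof.
have [_ [_ Hcol]] := Hu.
apply: is_series_eq_psum_sq => [j|j|]; try exact: pow2_ge_0.
apply: psum_sq_blocks => b; symmetry.
rewrite (eq_big_nat _ _ (F2 := fun i => (\sum_(sq b <= j < sq b.+1) (z j * u i j)) ^ 2)).
  by apply: (sum_sq_orthonormal_comb _ _ (fun j i => u i j)) => j j'; apply: Hcol.
by move=> i Hi; rewrite (analysis_block _ _ _ Hi).
Qed.

Lemma lin_comb_synth a n j : lin_comb u a n j = synth (trunc a n) j.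
Proof.
have [Hsupp _] := Hu.
elim: n => [|n IH] /=.
  by rewrite /synth big1 // => i _; rewrite /trunc; case: (Nat.ltb_spec i 0) => H; [lia | ring].
rewrite IH /synth.
rewrite [RHS](eq_bigr (fun i => trunc a n i * u i j + a n * u i j * (if Nat.eqb n i then 1 else 0))).
  rewrite big_split /=; congr (_ + _).
  case: (boolP (sq (block_of j) <= n < sq (block_of j).+1)%N) => Hn.
    by rewrite (sum_kronecker _ _ (fun i => a n * u i j)).
  rewrite Hsupp; last by move=> E; move: Hn; rewrite -E block_of_spec.
  rewrite big_nat_cond big1 ?Rmult_0_r // => i /andP [Hi _].
  by case: (Nat.eqb_spec n i) => [E|_]; [move: Hn; rewrite E Hi | ring].
move=> i _; rewrite /trunc.
by case: (Nat.ltb_spec i n); case: (Nat.ltb_spec i n.+1); case: (Nat.eqb_spec n i);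
  move=> *; try lia; subst; ring.
Qed.

Lemma isometric_to_canon_of_block_orthogonal : isometric_to_canon u.
Proof.
move=> a n; rewrite /l2norm; congr sqrt.
rewrite (Series_ext _ (fun j => synth (trunc a n) j ^ 2)); last by move=> j; rewrite lin_comb_synth.
rewrite [RHS](Series_ext _ (fun j => trunc a n j ^ 2)); last by move=> j; rewrite lin_comb_canon.
have H := is_series_trunc_sq a n.
by rewrite (is_series_unique _ _ H) (is_series_unique _ _ (proj1 (is_series_sq_synth _ _) H)).
Qed.

(** Parseval, blockwise: in the coordinates of [u] the residual is
    [a i - analysis x i] for [i < n] and [- analysis x i] beyond. *)
Lemma is_series_sq_residual x X a n : is_series (fun i => x i ^ 2) X ->
  let r := X + psum (fun i => (a i - analysis x i) ^ 2 - analysis x i ^ 2) n in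
  is_series (fun i => vsub (trunc a n) (analysis x) i ^ 2) r /\
  is_series (fun j => vsub (lin_comb u a n) x j ^ 2) r.
Proof.
move=> HX r; set y := analysis x; set g := fun i => (a i - y i) ^ 2 - y i ^ 2.
have Hg : is_series (fun i => if Nat.ltb i n then g i else 0) (psum g n).
  rewrite (psum_ext g (fun i => if Nat.ltb i n then g i else 0)).
    by apply: is_series_finite_support => j Hj; case: (Nat.ltb_spec j n) => //; lia.
  by move=> j Hj; case: (Nat.ltb_spec j n) => //; lia.
have Htr : is_series (fun i => vsub (trunc a n) y i ^ 2) r.
  apply: (is_series_ext (fun i => plus (y i ^ 2) (if Nat.ltb i n then g i else 0))).
    by move=> i; rewrite /plus /= /vsub /trunc /g; case: (Nat.ltb_spec i n) => _; ring.
  exact: is_series_plus (is_series_sq_analysis _ _ HX) Hg.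
split=> //; apply: (is_series_ext (fun j => synth (vsub (trunc a n) y) j ^ 2)).
  by move=> j; rewrite synth_sub /vsub lin_comb_synth /y synth_analysis.
exact: (proj1 (is_series_sq_synth _ _) Htr).
Qed.

Lemma expands_analysis x : in_l2 x -> expands u (analysis x) x.
Proof.
move=> [X HX]; set y := analysis x.
have E n : l2norm (vsub (lin_comb u y n) x) =
           sqrt (X + psum (fun i => (y i - y i) ^ 2 - y i ^ 2) n).
  by rewrite /l2norm (is_series_unique _ _ (proj2 (is_series_sq_residual x X y n HX))).
apply: (is_lim_seq_ext _ _ _ (fun n => esym (E n))); rewrite -sqrt_0.
apply: is_lim_seq_continuous; first exact: continuity_pt_sqrt (Rle_refl 0).
have -> : 0 = X - X by ring.
apply: is_lim_seq_ext (is_lim_seq_minus' _ _ _ _ (is_lim_seq_const X)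
          (proj1 (is_series_psum _ _) (is_series_sq_analysis _ _ HX))) => n.
have -> : psum (fun i => (y i - y i) ^ 2 - y i ^ 2) n = - psum (fun i => y i ^ 2) n.
  by elim: n => [|n IH]; rewrite ?psum0 ?psumS ?IH; ring.
by rewrite /y; ring.
Qed.

(** The [k]-th coefficient is controlled by every residual norm with [k < n]. *)
Lemma expands_unique x a : in_l2 x -> expands u a x -> forall k, a k = analysis x k.
Proof.
move=> [X HX] Ha k; set y := analysis x.
have Hle n : (k < n)%N -> Rabs (a k - y k) <= l2norm (vsub (lin_comb u a n) x).
  move=> Hn; have [H1 H2] := is_series_sq_residual x X a n HX.
  rewrite /l2norm (is_series_unique _ _ H2) -(is_series_unique _ _ H1).
  rewrite -sqrt_Rsqr_abs; apply: sqrt_le_1_alt.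
  have -> : Rsqr (a k - y k) = vsub (trunc a n) y k ^ 2.
    by rewrite /vsub /trunc /Rsqr; case: (Nat.ltb_spec k n) => H; [ring | lia].
  apply: (Series_ge_term (fun i => vsub (trunc a n) y i ^ 2)) => [i|]; first exact: pow2_ge_0.
  by eexists; exact: H1.
have := is_lim_seq_le_loc (fun _ => Rabs (a k - y k)) _ _ 0
  (ex_intro _ k.+1 (fun n Hn => Hle n (introT leP Hn))) (is_lim_seq_const _) Ha.
by move=> /= H0; have := Rabs_pos (a k - y k); have := Rabs_eq_0 (a k - y k); lra.
Qed.

Lemma is_basis_of_block_orthogonal : is_basis u.
Proof.
have [Hsupp _] := Hu; split.
  move=> i; exists (psum (fun j => u i j ^ 2) (sq (block_of i).+1)).
  apply: is_series_finite_support => j Hj; rewrite Hsupp; first ring.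
  by move=> E; have := block_of_ge _ _ Hj; rewrite -E; lia.
move=> x Hx; exists (analysis x); split; first exact: expands_analysis.
by move=> b Hb; apply: expands_unique.
Qed.

End BlockOrthogonal.

(** * Cyclic sums of the kernel [sin (N y) / sin y] *)

Lemma INR_gt0 n : (0 < n)%N -> 0 < INR n.
Proof. by move=> /ltP; exact: lt_0_INR. Qed.

Lemma pow_m1_sq t : (-1) ^ t * (-1) ^ t = 1.
Proof. by rewrite -pow_add (_ : (t + t = 2 * t)%coq_nat) ?pow_1_even //; lia. Qed.

Lemma sin_add_nPI x t : sin (x + INR t * PI) = (-1) ^ t * sin x.
Proof.
elim: t => [|t IH]; first by rewrite /= Rmult_0_l Rplus_0_r Rmult_1_l.
by rewrite S_INR (_ : x + (INR t + 1) * PI = x + INR t * PI + PI) ?neg_sin ?IH /=; ring.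
Qed.

Definition dirichlet (N : nat) (y : R) : R := sin (INR N * y) / sin y.

Definition cot (x : R) : R := cos x / sin x.

Definition cyclic_sum (N : nat) (h : R -> R) (al : R) : R :=
  \sum_(0 <= t < N) h (al + INR t * PI / INR N).

Lemma cot_periodic x : cot (x + PI) = cot x.
Proof.
rewrite /cot neg_sin neg_cos; case: (Req_dec (sin x) 0) => H.
  by rewrite H Ropp_0 /Rdiv Rinv_0; ring.
by field.
Qed.

Lemma dirichlet_sq_periodic N x : dirichlet N (x + PI) ^ 2 = dirichlet N x ^ 2.
Proof.
rewrite /dirichlet neg_sin Rmult_plus_distr_l sin_add_nPI.
case: (Req_dec (sin x) 0) => H; first by rewrite H Ropp_0 /Rdiv Rinv_0; ring.
have := pow_m1_sq N; rewrite /=; move=> E.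
by rewrite -[RHS]Rmult_1_l -E; field.
Qed.

Lemma dirichlet_even N x : dirichlet N (- x) = dirichlet N x.
Proof.
rewrite /dirichlet -Ropp_mult_distr_r !sin_neg; case: (Req_dec (sin x) 0) => H.
  by rewrite H Ropp_0 /Rdiv Rinv_0 !Rmult_0_r.
by field.
Qed.

Lemma cyclic_sum_shift N h al : (0 < N)%N -> (forall x, h (x + PI) = h x) ->
  cyclic_sum N h (al + PI / INR N) = cyclic_sum N h al.
Proof.
move=> HN Hh; have HN' := INR_gt0 N HN.
set F := fun t => h (al + INR t * PI / INR N).
have -> : cyclic_sum N h (al + PI / INR N) = \sum_(0 <= t < N) F t.+1.
  by apply: eq_bigr => t _; rewrite /F S_INR; congr h; field; lra.
have E := @big_nat_recl _ 0 Rplus N 0 F (leq0n N).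
rewrite (@big_nat_recr _ 0 Rplus N 0 F (leq0n N)) /= in E.
have HF : F N = F 0%N.
  by rewrite /F -[h (al + INR 0 * PI / INR N)]Hh; congr h; rewrite /=; field; lra.
change (\sum_(0 <= i < N) F i.+1 = \sum_(0 <= i < N) F i); lra.
Qed.

Lemma cyclic_sum_shift_n N h al m : (0 < N)%N -> (forall x, h (x + PI) = h x) ->
  cyclic_sum N h (al + INR m * PI / INR N) = cyclic_sum N h al.
Proof.
move=> HN Hh; have HN' := INR_gt0 N HN.
elim: m => [|m IH]; first by rewrite /= Rmult_0_l /Rdiv Rmult_0_l Rplus_0_r.
rewrite -IH -(cyclic_sum_shift N h (al + INR m * PI / INR N)) //.
by apply: eq_bigr => t _; rewrite S_INR; congr h; field; lra.
Qed.

Lemma dirichlet_mul N x y : sin x <> 0 -> sin y <> 0 -> sin (y - x) <> 0 ->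
  dirichlet N x * dirichlet N y =
  sin (INR N * x) * sin (INR N * y) / sin (y - x) * (cot x - cot y).
Proof.
move=> Hx Hy; rewrite /dirichlet /cot sin_minus => Hxy.
by field; repeat split.
Qed.

(** Along the nodes [al + t PI / N], [sin (N x) sin (N (x + m PI / N))] does not
    depend on [t], so the sum is a difference of two cyclic cotangent sums. *)
Lemma cyclic_sum_dirichlet_mul_shift N al m : (0 < m < N)%N ->
  (forall t, sin (al + INR t * PI / INR N) <> 0) ->
  \sum_(0 <= t < N) (dirichlet N (al + INR t * PI / INR N) *
                     dirichlet N ((al + INR m * PI / INR N) + INR t * PI / INR N)) = 0.
Proof.
move=> /andP [Hm HmN] Hs; have HN' := INR_gt0 N (ltn_trans Hm HmN).
have Hm' := INR_gt0 m Hm; have HmN' : INR m < INR N by apply: lt_INR; apply/ltP.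
have Hpi := PI_RGT_0.
set s := sin (INR m * PI / INR N).
have Hs0 : 0 < s.
  by apply: sin_gt_0; [apply: Rdiv_lt_0_compat; nra | apply/Rlt_div_l => //; nra].
set K := (-1) ^ m * sin (INR N * al) ^ 2.
have Hshift t : al + INR m * PI / INR N + INR t * PI / INR N = al + INR (m + t) * PI / INR N.
  by rewrite plus_INR; field; lra.
rewrite (eq_bigr (fun t => K / s * (cot (al + INR t * PI / INR N) -
                                    cot ((al + INR m * PI / INR N) + INR t * PI / INR N)))).
  rewrite -big_distrr /= big_Rminus.
  have -> : \sum_(0 <= t < N) cot (al + INR m * PI / INR N + INR t * PI / INR N) =
            \sum_(0 <= t < N) cot (al + INR t * PI / INR N).
    exact: cyclic_sum_shift_n N cot al m (ltn_trans Hm HmN) cot_periodic.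
  ring.
move=> t _; have Hmt : al + INR m * PI / INR N + INR t * PI / INR N - (al + INR t * PI / INR N) =
                       INR m * PI / INR N by ring.
rewrite dirichlet_mul ?Hmt -?/s; [| exact: Hs | rewrite Hshift; exact: Hs | lra].
congr (_ * _); congr (_ / _); rewrite Hshift.
rewrite (_ : INR N * (al + INR t * PI / INR N) = INR N * al + INR t * PI); last by field; lra.
rewrite (_ : INR N * (al + INR (m + t) * PI / INR N) = INR N * al + INR (m + t) * PI); last first.
  by field; lra.
rewrite !sin_add_nPI pow_add /K.
by rewrite -[RHS]Rmult_1_l -(pow_m1_sq t); ring.
Qed.

Lemma sin_node_neq0 N (z : Z) : (0 < N)%N -> sin (PI * (IZR z + /2) / INR N) <> 0.
Proof.
move=> HN H; have HN' := INR_gt0 N HN; have Hpi := PI_RGT_0.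
have [k Hk] := sin_eq_0_0 _ H.
have Hk' : IZR z + /2 = IZR k * INR N.
  apply: (Rmult_eq_reg_l (PI / INR N)); last by apply: Rgt_not_eq; apply: Rdiv_lt_0_compat.
  rewrite (_ : PI / INR N * (IZR z + / 2) = PI * (IZR z + / 2) / INR N); last by field; lra.
  by rewrite Hk; field; lra.
have E : IZR (2 * z + 1) = IZR (2 * k * Z.of_nat N).
  by rewrite plus_IZR !mult_IZR -INR_IZR_INZ /=; lra.
have := eq_IZR _ _ E; lia.
Qed.

Lemma dirichlet_gram N c k k' : (k < N)%N -> (k' < N)%N ->
  (forall z : Z, sin (c + IZR z * PI / INR N) <> 0) ->
  \sum_(0 <= t < N)
     (dirichlet N (c - INR k * PI / INR N + INR t * PI / INR N) *
      dirichlet N (c - INR k' * PI / INR N + INR t * PI / INR N)) =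
  if Nat.eqb k k' then cyclic_sum N (fun y => dirichlet N y ^ 2) c else 0.
Proof.
move=> Hk Hk' Hs; have HN : (0 < N)%N by lia.
have HN' := INR_gt0 N HN.
case: (Nat.eqb_spec k k') => [<-|Hne].
  have E := cyclic_sum_shift_n N (fun y => dirichlet N y ^ 2) (c - INR k * PI / INR N) k HN
    (dirichlet_sq_periodic N).
  rewrite (_ : c - INR k * PI / INR N + INR k * PI / INR N = c) in E; last by field; lra.
  by rewrite E; apply: eq_bigr => t _ /=; ring.
have Hsin a t : sin (c - INR a * PI / INR N + INR t * PI / INR N) <> 0.
  rewrite (_ : c - INR a * PI / INR N + INR t * PI / INR N =
               c + IZR (Z.of_nat t - Z.of_nat a) * PI / INR N); first exact: Hs.
  by rewrite minus_IZR -!INR_IZR_INZ; field; lra.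
have Hnode a a' : (a < a')%N -> c - INR a * PI / INR N =
    c - INR a' * PI / INR N + INR (a' - a) * PI / INR N.
  by move=> Ha; rewrite minus_INR; [field; lra | apply/leP; lia].
case: (ltnP k k') => Hlt.
  rewrite -[RHS](cyclic_sum_dirichlet_mul_shift N (c - INR k' * PI / INR N) (k' - k) _ (Hsin k'));
    last by apply/andP; split; lia.
  by apply: eq_bigr => t _; rewrite Rmult_comm (Hnode k k').
rewrite -[RHS](cyclic_sum_dirichlet_mul_shift N (c - INR k * PI / INR N) (k - k') _ (Hsin k));
  last by apply/andP; split; lia.
by apply: eq_bigr => t _; rewrite (Hnode k' k) //; lia.
Qed.

(** * The basis *)

Definition node (N : nat) (d : R) : R := PI * (d + /2) / INR N.

Definition energy (N : nat) : R := cyclic_sum N (fun y => dirichlet N y ^ 2) (node N 0).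

Definition entry (N : nat) (d : R) : R := dirichlet N (node N d) / sqrt (energy N).

Definition ubasis (i : nat) : vec := fun j =>
  if Nat.eqb (block_of i) (block_of j) then entry (2 * block_of i + 1) (INR j - INR i) else 0.

Lemma node_grid N d k t : (0 < N)%N ->
  node N (d + INR t - INR k) = node N d - INR k * PI / INR N + INR t * PI / INR N.
Proof. by move=> HN; have HN' := INR_gt0 N HN; rewrite /node; field; lra. Qed.

Lemma sin_node_grid_neq0 N (s : Z) : (0 < N)%N ->
  forall z : Z, sin (node N (IZR s) + IZR z * PI / INR N) <> 0.
Proof.
move=> HN z; have HN' := INR_gt0 N HN.
rewrite (_ : node N (IZR s) + IZR z * PI / INR N = PI * (IZR (s + z) + /2) / INR N).
  exact: sin_node_neq0.
by rewrite plus_IZR /node; field; lra.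
Qed.

Lemma energy_pos N : (0 < N)%N -> 0 < energy N.
Proof.
move=> HN; have HN' := INR_gt0 N HN.
rewrite /energy /cyclic_sum (big_ltn HN) /=.
have Hrest := sum_ge0 1 N (fun t => dirichlet N (node N 0 + INR t * PI / INR N) ^ 2)
  (fun t => pow2_ge_0 _).
have H0 : dirichlet N (node N 0 + 0 * PI / INR N) <> 0.
  rewrite /dirichlet (_ : INR N * (node N 0 + 0 * PI / INR N) = PI / 2); last first.
    by rewrite /node; field; lra.
  rewrite sin_PI2 /Rdiv Rmult_1_l; apply: Rinv_neq_0_compat.
  by have := sin_node_grid_neq0 N 0 HN 0; rewrite /= Rmult_0_l /Rdiv Rmult_0_l.
by move: Hrest; rewrite /=; nra.
Qed.

Lemma energy_shift N : (0 < N)%N ->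
  cyclic_sum N (fun y => dirichlet N y ^ 2) (node N (-1)) = energy N.
Proof.
move=> HN; have HN' := INR_gt0 N HN.
rewrite /energy -(cyclic_sum_shift_n N _ (node N (-1)) 1) //; last exact: dirichlet_sq_periodic.
by apply: eq_bigr => t _; congr (dirichlet N _ ^ 2); rewrite /node /=; field; lra.
Qed.

Lemma sum_entry_grid N c k k' : (k < N)%N -> (k' < N)%N ->
  (forall z : Z, sin (c + IZR z * PI / INR N) <> 0) ->
  cyclic_sum N (fun y => dirichlet N y ^ 2) c = energy N ->
  \sum_(0 <= t < N)
     (dirichlet N (c - INR k * PI / INR N + INR t * PI / INR N) / sqrt (energy N) *
      (dirichlet N (c - INR k' * PI / INR N + INR t * PI / INR N) / sqrt (energy N))) =
  if Nat.eqb k k' then 1 else 0.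
Proof.
move=> Hk Hk' Hs Hc; have HE := energy_pos N (leq_ltn_trans (leq0n k) Hk).
rewrite (eq_bigr (fun t => dirichlet N (c - INR k * PI / INR N + INR t * PI / INR N) *
   dirichlet N (c - INR k' * PI / INR N + INR t * PI / INR N) /
   (sqrt (energy N) * sqrt (energy N)))).
  rewrite /Rdiv -big_distrl /= dirichlet_gram // Hc sqrt_sqrt; last lra.
  by case: (Nat.eqb k k'); field; lra.
move=> t _; have := sqrt_lt_R0 _ HE; move=> Hq; field; lra.
Qed.

Lemma ubasis_grid b k t : (k < 2 * b + 1)%N -> (t < 2 * b + 1)%N ->
  ubasis (k + sq b) (t + sq b)%N = entry (2 * b + 1) (INR t - INR k).
Proof.
move=> Hk Ht; rewrite /ubasis (block_of_in _ _ (in_block _ _ Hk)).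
rewrite (block_of_in _ _ (in_block _ _ Ht)) Nat.eqb_refl !plus_INR.
by congr entry; ring.
Qed.

Lemma block_index b i : (sq b <= i < sq b.+1)%N ->
  exists2 k, (k < 2 * b + 1)%N & i = (k + sq b)%N.
Proof. by rewrite sq_succ => Hi; exists (i - sq b)%N; lia. Qed.

Lemma ubasis_rows b i i' : (sq b <= i < sq b.+1)%N -> (sq b <= i' < sq b.+1)%N ->
  \sum_(sq b <= j < sq b.+1) (ubasis i j * ubasis i' j) = if Nat.eqb i i' then 1 else 0.
Proof.
move=> /block_index [k Hk ->] /block_index [k' Hk' ->]; set N := (2 * b + 1)%N.
have HN : (0 < N)%N by rewrite /N addn1.
rewrite sum_block_shift -/N (eq_big_nat _ _ (F2 := fun t =>
  dirichlet N (node N 0 - INR k * PI / INR N + INR t * PI / INR N) / sqrt (energy N) *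
  (dirichlet N (node N 0 - INR k' * PI / INR N + INR t * PI / INR N) / sqrt (energy N)))).
  rewrite sum_entry_grid //; last exact: (sin_node_grid_neq0 N 0 HN).
  by case: (Nat.eqb_spec k k'); case: (Nat.eqb_spec (k + sq b) (k' + sq b)) => //; lia.
move=> t /andP [_ Ht]; rewrite !ubasis_grid // /entry.
by rewrite -!node_grid // Rplus_0_l.
Qed.

Lemma ubasis_cols b j j' : (sq b <= j < sq b.+1)%N -> (sq b <= j' < sq b.+1)%N ->
  \sum_(sq b <= i < sq b.+1) (ubasis i j * ubasis i j') = if Nat.eqb j j' then 1 else 0.
Proof.
move=> /block_index [k Hk ->] /block_index [k' Hk' ->]; set N := (2 * b + 1)%N.
have HN : (0 < N)%N by rewrite /N addn1.
rewrite sum_block_shift -/N (eq_big_nat _ _ (F2 := fun t =>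
  dirichlet N (node N (-1) - INR k * PI / INR N + INR t * PI / INR N) / sqrt (energy N) *
  (dirichlet N (node N (-1) - INR k' * PI / INR N + INR t * PI / INR N) / sqrt (energy N)))).
  rewrite sum_entry_grid ?energy_shift //; last exact: (sin_node_grid_neq0 N (-1) HN).
  by case: (Nat.eqb_spec k k'); case: (Nat.eqb_spec (k + sq b) (k' + sq b)) => //; lia.
move=> t /andP [_ Ht]; rewrite !ubasis_grid // /entry -!node_grid //.
rewrite -(dirichlet_even N (node N (-1 + _ - _))) -(dirichlet_even N (node N (-1 + _ - INR k'))).
have HN' := INR_gt0 N HN.
by congr (dirichlet N _ / _ * (dirichlet N _ / _)); rewrite /node -/N; field; lra.
Qed.

Lemma block_orthogonal_ubasis : block_orthogonal ubasis.
Proof.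
split; last by split; [exact: ubasis_rows | exact: ubasis_cols].
by move=> i j H; rewrite /ubasis; case: (Nat.eqb_spec (block_of i) (block_of j)).
Qed.

(** * Size of the energy and of the diagonal partial sums *)

Lemma dirichlet_node N n : (0 < N)%N ->
  dirichlet N (node N (INR n)) = (-1) ^ n / sin (node N (INR n)).
Proof.
move=> HN; have HN' := INR_gt0 N HN.
rewrite /dirichlet (_ : INR N * node N (INR n) = PI / 2 + INR n * PI); last first.
  by rewrite /node; field; lra.
by rewrite sin_add_nPI sin_PI2 Rmult_1_r.
Qed.

Lemma sin_node_gt0 N d : (0 < N)%N -> 0 <= d -> d + 1 <= INR N -> 0 < sin (node N d).
Proof.
move=> HN Hd HdN; have HN' := INR_gt0 N HN; have Hpi := PI_RGT_0.
by apply: sin_gt_0; rewrite /node; [apply: Rdiv_lt_0_compat; nra | apply/Rlt_div_l => //; nra].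
Qed.

(** Comparison with the Taylor polynomial [x - x^3/6], using [PI <= 4]. *)
Lemma sin_ge_third x : 0 <= x -> x <= PI / 2 -> x / 3 <= sin x.
Proof.
move=> H0 H1; have Hpi := PI_4.
have [H _] := sin_bound x 0 H0 ltac:(lra).
by move: H; rewrite /sin_approx /sin_term /=; nra.
Qed.

Lemma inv_sin_sq_le x : 0 < x -> x < PI -> / sin x ^ 2 <= 9 / x ^ 2 + 9 / (PI - x) ^ 2.
Proof.
move=> H0 H1.
have Ha : 0 < 9 / x ^ 2 by apply: Rdiv_lt_0_compat; nra.
have Hb : 0 < 9 / (PI - x) ^ 2 by apply: Rdiv_lt_0_compat; nra.
have Hinv y : 0 < y -> y / 3 <= sin x -> / sin x ^ 2 <= 9 / y ^ 2.
  by move=> Hy Hs; rewrite /Rdiv -[9]Rinv_inv -Rinv_mult; apply: Rinv_le_contravar; nra.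
case: (Rle_lt_dec x (PI / 2)) => Hx.
  by have := Hinv x H0 (sin_ge_third x ltac:(lra) Hx); lra.
have Hs := sin_ge_third (PI - x) ltac:(lra) ltac:(lra); rewrite sin_PI_x in Hs.
by have := Hinv (PI - x) ltac:(lra) Hs; lra.
Qed.

(** Telescoping against [1/(t+1) - 1/(t+2)]. *)
Lemma sum_inv_sq_half_le n : \sum_(0 <= t < n) / (INR t + /2) ^ 2 <= 5.
Proof.
suff H m : \sum_(0 <= t < m.+1) / (INR t + /2) ^ 2 <= 5 - / (INR m + 1).
  case: n => [|n]; first by rewrite big_geq //; lra.
  have Hn := pos_INR n; have : 0 < / (INR n + 1) by apply: Rinv_0_lt_compat; lra.
  by have := H n; lra.
elim: m => [|m IH]; first by rewrite sum_nat_recr // big_geq //=; lra.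
rewrite sum_nat_recr // !S_INR; have Hm := pos_INR m.
have : / (INR m + 1 + / 2) ^ 2 <= / (INR m + 1) - / (INR m + 1 + 1).
  rewrite (_ : / (INR m + 1) - / (INR m + 1 + 1) = / ((INR m + 1) * (INR m + 1 + 1))).
    by apply: Rinv_le_contravar; nra.
  by field; lra.
by lra.
Qed.

Lemma inv_sin_node_sq_le N t : (t < N)%N ->
  / sin (node N (INR t)) ^ 2 <=
  9 * INR N ^ 2 / PI ^ 2 * (/ (INR t + /2) ^ 2 + / (INR N - INR t - /2) ^ 2).
Proof.
move=> Ht; have HN' := INR_gt0 N (leq_ltn_trans (leq0n t) Ht); have Hpi := PI_RGT_0.
have Ht' : INR t + 1 <= INR N by rewrite -S_INR; apply: le_INR; apply/leP.
have Ht0 := pos_INR t.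
have H1 : 0 < node N (INR t) by rewrite /node; apply: Rdiv_lt_0_compat => //; nra.
have H2 : node N (INR t) < PI by rewrite /node; apply/Rlt_div_l => //; nra.
apply: Rle_trans (inv_sin_sq_le _ H1 H2) _; apply: Req_le; rewrite /node.
by field; repeat split; nra.
Qed.

Lemma energy_le N : (0 < N)%N -> energy N <= 90 * INR N ^ 2 / PI ^ 2.
Proof.
move=> HN; have HN' := INR_gt0 N HN; have Hpi := PI_RGT_0.
rewrite /energy /cyclic_sum (eq_bigr (fun t => / sin (node N (INR t)) ^ 2)); last first.
  move=> t _; rewrite (_ : node N 0 + INR t * PI / INR N = node N (INR t)); last first.
    by rewrite /node; field; lra.
  have Hs : sin (node N (INR t)) <> 0 by rewrite /node INR_IZR_INZ; exact: sin_node_neq0.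
  by rewrite dirichlet_node // -[RHS]Rmult_1_l -(pow_m1_sq t); field.
apply: (Rle_trans _ (\sum_(0 <= t < N)
   (9 * INR N ^ 2 / PI ^ 2 * (/ (INR t + /2) ^ 2 + / (INR N - INR t - /2) ^ 2)))).
  by apply: ler_sum_nat => t /andP [_ Ht]; exact: inv_sin_node_sq_le.
have Hrefl : \sum_(0 <= t < N) / (INR N - INR t - / 2) ^ 2 <= 5.
  rewrite big_nat_rev (eq_big_nat _ _ (F2 := fun t => / (INR t + /2) ^ 2)).
    exact: sum_inv_sq_half_le.
  move=> t /andP [_ Ht]; rewrite add0n minus_INR; last by apply/leP; lia.
  by rewrite S_INR; congr (/ _ ^ 2); lra.
have Hc : 0 <= 9 * INR N ^ 2 / PI ^ 2.
  by apply: Rmult_le_pos; [nra | apply: Rlt_le; apply: Rinv_0_lt_compat; nra].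
rewrite -big_distrr sum_nat_split (_ : 90 * INR N ^ 2 / PI ^ 2 = 9 * INR N ^ 2 / PI ^ 2 * 10).
  by apply: Rmult_le_compat_l => //; have := sum_inv_sq_half_le N; lra.
by field; lra.
Qed.

Definition harm (J : nat) : R := \sum_(0 <= d < J) / (INR d + 3/2).

Lemma harm_term_gt0 d : 0 < / (INR d + 3/2).
Proof. by apply: Rinv_0_lt_compat; have := pos_INR d; lra. Qed.

Lemma harm_ge0 J : 0 <= harm J.
Proof. by apply: sum_ge0 => d; apply: Rlt_le; apply: harm_term_gt0. Qed.

Lemma harm_monotone j J : (J <= j)%N -> harm J <= harm j.
Proof.
move=> H; rewrite /harm [X in _ <= X](sum_nat_cat _ J) //.
by have := sum_ge0 J j _ (fun d => Rlt_le _ _ (harm_term_gt0 d)); lra.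
Qed.

Lemma ln_le_harm J : ln (INR J + 3/2) - ln (3/2) <= harm J.
Proof.
elim: J => [|J IH]; first by rewrite /harm big_geq // /= Rplus_0_l; lra.
rewrite /harm sum_nat_recr // -/(harm J) S_INR; have Hj := pos_INR J.
suff : ln (INR J + 1 + 3/2) - ln (INR J + 3/2) <= / (INR J + 3/2) by lra.
rewrite -ln_div; try lra.
rewrite (_ : (INR J + 1 + 3/2) / (INR J + 3/2) = 1 + / (INR J + 3/2)); last by field; lra.
rewrite -[X in _ <= X]ln_exp; apply: ln_le; first by have := harm_term_gt0 J; lra.
exact: exp_ineq1_le.
Qed.

Lemma harm_unbounded M : exists J, M < harm J.
Proof.
have [J HJ] := INR_unbounded (exp (M + ln (3/2))); exists J.
apply: Rlt_le_trans (ln_le_harm J).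
suff : M + ln (3/2) < ln (INR J + 3/2) by lra.
rewrite -[X in X < _]ln_exp; apply: ln_increasing; first exact: exp_pos.
by lra.
Qed.

Definition alt_vec (b i : nat) : R :=
  if Nat.eqb (block_of i) b then (-1) ^ (i - sq b) / sqrt (INR (2 * b + 1)) else 0.

(** The coordinate [b^2 + j] of the [(b^2 + j)]-th partial sum of the expansion
    of [alt_vec b] in [ubasis]; only the block [b] contributes. *)
Definition diag_psum (b j : nat) : R :=
  \sum_(0 <= k < j) (alt_vec b (k + sq b)%N * ubasis (k + sq b)%N (j + sq b)%N).

Lemma alt_vec_grid b t : (t < 2 * b + 1)%N ->
  alt_vec b (t + sq b)%N = (-1) ^ t / sqrt (INR (2 * b + 1)).
Proof. by move=> Ht; rewrite /alt_vec (block_of_in _ _ (in_block _ _ Ht)) Nat.eqb_refl addnK. Qed.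

Lemma diag_psum_term b j k : (k < j)%N -> (j < 2 * b + 1)%N ->
  alt_vec b (k + sq b)%N * ubasis (k + sq b)%N (j + sq b)%N =
  (-1) ^ j / (sqrt (INR (2 * b + 1)) * sqrt (energy (2 * b + 1))) /
  sin (node (2 * b + 1) (INR (j - k))).
Proof.
move=> Hkj Hj; have Hk : (k < 2 * b + 1)%N by lia.
rewrite alt_vec_grid // ubasis_grid // /entry (_ : INR j - INR k = INR (j - k)); last first.
  by rewrite minus_INR //; apply/leP; lia.
rewrite dirichlet_node; last by rewrite addn1.
rewrite (_ : (-1) ^ j = (-1) ^ k * (-1) ^ (j - k)).
  by rewrite /Rdiv !Rinv_mult; ring.
by rewrite -pow_add; congr pow; lia.
Qed.

(** From [sin x < x] on the nodes. *)
Lemma sum_inv_sin_node_ge N j : (j < N)%N ->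
  INR N / PI * harm j <= \sum_(0 <= k < j) / sin (node N (INR (j - k))).
Proof.
move=> Hj; have HN : (0 < N)%N by lia.
have HN' := INR_gt0 N HN; have Hpi := PI_RGT_0.
rewrite /harm big_distrr [X in _ <= X]big_nat_rev /=.
apply: ler_sum_nat => k /andP [_ Hk]; rewrite add0n.
rewrite (_ : INR (j - (j - k.+1)) = INR k + 1); last first.
  by rewrite !minus_INR ?S_INR; [ring | apply/leP; lia | apply/leP; lia].
have Hk0 := pos_INR k.
have HkN : INR k + 2 <= INR N.
  by rewrite (_ : INR k + 2 = INR k.+2); [apply: le_INR; apply/leP; lia | rewrite !S_INR; ring].
have Hth0 : 0 < node N (INR k + 1) by rewrite /node; apply: Rdiv_lt_0_compat => //; nra.
have Hsin := sin_node_gt0 N (INR k + 1) HN ltac:(lra) ltac:(lra).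
apply: Rle_trans (Rinv_le_contravar _ _ Hsin (Rlt_le _ _ (sin_lt_x _ Hth0))).
by apply: Req_le; rewrite /node; field; lra.
Qed.

Lemma diag_psum_sq b j : (j < 2 * b + 1)%N ->
  diag_psum b j ^ 2 =
  (\sum_(0 <= k < j) / sin (node (2 * b + 1) (INR (j - k)))) ^ 2 /
  (INR (2 * b + 1) * energy (2 * b + 1)).
Proof.
move=> Hj; set N := (2 * b + 1)%N.
have HN : (0 < N)%N by rewrite /N addn1.
have HN' := INR_gt0 N HN; have HE := energy_pos N HN.
rewrite /diag_psum (eq_big_nat _ _ (F2 := fun k =>
  (-1) ^ j / (sqrt (INR N) * sqrt (energy N)) * / sin (node N (INR (j - k))))); last first.
  by move=> k /andP [_ Hk]; rewrite diag_psum_term.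
rewrite -big_distrr.
have Hsq (a s n e : R) : a * a = 1 -> 0 < n -> 0 < e ->
    (a / (sqrt n * sqrt e) * s) ^ 2 = s ^ 2 / (n * e).
  move=> Ha Hn He; have := sqrt_lt_R0 n Hn; have := sqrt_lt_R0 e He => He1 Hn1.
  rewrite -{2}(sqrt_sqrt n (Rlt_le _ _ Hn)) -{2}(sqrt_sqrt e (Rlt_le _ _ He)).
  by rewrite -[RHS]Rmult_1_l -Ha; field; lra.
exact: Hsq (pow_m1_sq j) HN' HE.
Qed.

Lemma diag_psum_sq_ge b j : (j < 2 * b + 1)%N ->
  harm j ^ 2 / (90 * INR (2 * b + 1)) <= diag_psum b j ^ 2.
Proof.
move=> Hj; set N := (2 * b + 1)%N.
have HN : (0 < N)%N by rewrite /N addn1.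
have HN' := INR_gt0 N HN; have Hpi := PI_RGT_0.
have HE := energy_pos N HN; have HEle := energy_le N HN.
have HS := sum_inv_sin_node_ge N j Hj.
have HA : 0 <= INR N / PI * harm j.
  by apply: Rmult_le_pos; [apply: Rlt_le; apply: Rdiv_lt_0_compat | exact: harm_ge0].
rewrite diag_psum_sq // -/N.
apply: (Rle_trans _ ((INR N / PI * harm j) ^ 2 / (INR N * energy N))); last first.
  by apply: Rmult_le_compat_r; [apply: Rlt_le; apply: Rinv_0_lt_compat; nra | nra].
rewrite (_ : (INR N / PI * harm j) ^ 2 / (INR N * energy N) =
             INR N / PI ^ 2 * harm j ^ 2 / energy N); last by field; lra.
apply: (Rle_trans _ (INR N / PI ^ 2 * harm j ^ 2 / (90 * INR N ^ 2 / PI ^ 2))).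
  by apply: Req_le; field; lra.
apply: Rmult_le_compat_l; last exact: Rinv_le_contravar.
by apply: Rmult_le_pos; [apply: Rlt_le; apply: Rdiv_lt_0_compat; nra | nra].
Qed.

(** Half of the [2b+1] diagonal values have index at least [b]. *)
Lemma sum_diag_psum_sq_ge b :
  harm b ^ 2 / 180 <= \sum_(0 <= j < 2 * b + 1) diag_psum b j ^ 2.
Proof.
set N := (2 * b + 1)%N.
have HN' : INR N = 2 * INR b + 1 by rewrite /N plus_INR mult_INR /=; ring.
have Hb := pos_INR b; have HH := harm_ge0 b.
rewrite (sum_nat_cat _ b); [| lia | rewrite /N; lia].
have H0 := sum_ge0 0 b (fun j => diag_psum b j ^ 2) (fun j => pow2_ge_0 _).
suff : harm b ^ 2 / 180 <= \sum_(b <= j < N) (harm b ^ 2 / (90 * INR N)).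
  have : \sum_(b <= j < N) (harm b ^ 2 / (90 * INR N)) <= \sum_(b <= j < N) diag_psum b j ^ 2.
    apply: ler_sum_nat => j /andP [Hbj HjN]; apply: Rle_trans (diag_psum_sq_ge _ _ HjN).
    apply: Rmult_le_compat_r; first by apply: Rlt_le; apply: Rinv_0_lt_compat; lra.
    by have := harm_monotone j b Hbj; nra.
  by lra.
rewrite sum_const_nat; last by rewrite /N; lia.
rewrite (_ : (N - b = b.+1)%N); last by rewrite /N; lia.
rewrite S_INR HN' (_ : (INR b + 1) * (harm b ^ 2 / (90 * (2 * INR b + 1))) =
  harm b ^ 2 / 180 * ((2 * INR b + 2) / (2 * INR b + 1))); last by field; lra.
rewrite -[X in X <= _]Rmult_1_r; apply: Rmult_le_compat_l; first nra.
by apply/Rle_div_r; lra.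
Qed.

(** * Test vectors *)

Lemma sup_abs_ge0 f m j : 0 <= sup_abs f m j.
Proof. by elim: m => [|m IH] /=; [lra | apply: Rle_trans IH (Rmax_l _ _)]. Qed.

Lemma sup_abs_ge f m n j : (1 <= n <= m)%N -> Rabs (f n j) <= sup_abs f m j.
Proof.
elim: m => [|m IH] Hn /=; first by lia.
case: (ltnP n m.+1) => Hnm; first by apply: Rle_trans (IH _) (Rmax_l _ _); lia.
by rewrite (_ : n = m.+1); [apply: Rmax_r | lia].
Qed.

Lemma sup_abs_eq0 f m j : (forall n, f n j = 0) -> sup_abs f m j = 0.
Proof.
move=> H; elim: m => [|m IH] //=.
by rewrite IH H Rabs_R0; apply: Rmax_left; lra.
Qed.

Lemma lin_comb_sum u a n j : lin_comb u a n j = \sum_(0 <= i < n) (a i * u i j).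
Proof. by elim: n => [|n IH] /=; [rewrite big_geq | rewrite sum_nat_recr // IH]. Qed.

Lemma list_comb_seq u a s t j :
  list_comb u a (List.seq s t) j = \sum_(0 <= k < t) (a (k + s)%N * u (k + s)%N j).
Proof.
elim: t s => [|t IH] s; first by rewrite /list_comb /= big_geq.
rewrite big_nat_recl //=; congr Rplus; rewrite IH.
by apply: eq_bigr => k _; rewrite addSnnS.
Qed.

Lemma lin_comb_eq0 u a n j : (forall i, a i * u i j = 0) -> lin_comb u a n j = 0.
Proof. by move=> H; rewrite lin_comb_sum big1. Qed.

Lemma list_comb_eq0 u a l j : (forall i, a i * u i j = 0) -> list_comb u a l j = 0.
Proof. by move=> H; elim: l => [|i l IH] //; rewrite /list_comb /= -/(list_comb u a l j) IH H; ring. Qed.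

Lemma alt_vec_out b i : block_of i <> b -> alt_vec b i = 0.
Proof. by rewrite /alt_vec; case: (Nat.eqb_spec (block_of i) b). Qed.

Lemma alt_vec_abs b i : (sq b <= i < sq b.+1)%N ->
  Rabs (alt_vec b i) = / sqrt (INR (2 * b + 1)).
Proof.
move=> /block_index [t Ht ->]; rewrite alt_vec_grid // /Rdiv Rabs_mult pow_1_abs Rmult_1_l.
by rewrite Rabs_inv Rabs_right //; apply: Rle_ge; apply: sqrt_pos.
Qed.

Lemma alt_vec_abs_pos b : 0 < / sqrt (INR (2 * b + 1)).
Proof. by apply: Rinv_0_lt_compat; apply: sqrt_lt_R0; apply: INR_gt0; rewrite addn1. Qed.

Lemma alt_vec_ubasis_after b i j : (sq b.+1 <= j)%N -> alt_vec b i * ubasis i j = 0.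
Proof.
move=> Hj; case: (Nat.eqb_spec (block_of i) b) => E; last by rewrite alt_vec_out // Rmult_0_l.
have [Hsupp _] := block_orthogonal_ubasis.
by rewrite Hsupp ?Rmult_0_r // => E'; have := block_of_ge _ _ Hj; lia.
Qed.

Lemma lin_comb_diag b t :
  lin_comb ubasis (alt_vec b) (t + sq b) (t + sq b)%N = diag_psum b t.
Proof.
rewrite lin_comb_sum (sum_nat_cat _ (sq b)); [| lia | lia].
rewrite big_nat_cond big1 ?Rplus_0_l; last first.
  move=> i /andP [/andP [_ Hi] _]; rewrite alt_vec_out ?Rmult_0_l // => E.
  by have := block_of_spec i; rewrite E; lia.
by rewrite -{1}(add0n (sq b)) big_addn addnK.
Qed.

Lemma list_comb_diag b t :
  list_comb ubasis (alt_vec b) (List.seq (sq b) t) (t + sq b)%N = diag_psum b t.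
Proof. exact: list_comb_seq. Qed.

Lemma l2norm_ge_diag_psum (V : vec) b : (forall j, (sq b.+1 <= j)%N -> V j = 0) ->
  (forall t, (t < 2 * b + 1)%N -> diag_psum b t ^ 2 <= V (t + sq b)%N ^ 2) ->
  sqrt (harm b ^ 2 / 180) <= l2norm V.
Proof.
move=> Hz Hw; rewrite /l2norm; apply: sqrt_le_1_alt.
have Hs : is_series (fun k => V k ^ 2) (psum (fun k => V k ^ 2) (sq b.+1)).
  by apply: is_series_finite_support => j Hj; rewrite Hz //; ring.
rewrite (is_series_unique _ _ Hs) /psum (sum_nat_cat _ (sq b)); [| lia | by rewrite sq_succ leq_addr].
have := sum_ge0 0 (sq b) (fun k => V k ^ 2) (fun k => pow2_ge_0 _).
suff : harm b ^ 2 / 180 <= \sum_(sq b <= i < sq b.+1) V i ^ 2 by lra.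
rewrite sum_block_shift; apply: Rle_trans (sum_diag_psum_sq_ge b) _.
by apply: ler_sum_nat => t /andP [_ Ht]; exact: Hw.
Qed.

Lemma l2norm_sup_abs_ge b f m (idx : nat -> nat) :
  (forall n j, (sq b.+1 <= j)%N -> f n j = 0) ->
  (forall t, (0 < t < 2 * b + 1)%N ->
     (1 <= idx t <= m)%N /\ f (idx t) (t + sq b)%N = diag_psum b t) ->
  sqrt (harm b ^ 2 / 180) <= l2norm (sup_abs f m).
Proof.
move=> Hsupp Hdiag; apply: l2norm_ge_diag_psum => [j Hj|t Ht].
  by apply: sup_abs_eq0 => n; exact: Hsupp.
have H0 := sup_abs_ge0 f m (t + sq b)%N.
case: (posnP t) => [->|Ht0]; first by rewrite /diag_psum big_geq //; nra.
have [Hidx <-] := Hdiag t ltac:(lia).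
have := sup_abs_ge f m (idx t) (t + sq b)%N Hidx.
by rewrite -pow2_abs; have := Rabs_pos (f (idx t) (t + sq b)%N); nra.
Qed.

Definition test_vec (b : nat) : vec := lin_comb ubasis (alt_vec b) (sq b.+1).

Lemma test_vec_after b j : (sq b.+1 <= j)%N -> test_vec b j = 0.
Proof. by move=> Hj; apply: lin_comb_eq0 => i; exact: alt_vec_ubasis_after. Qed.

Lemma alt_vec_sq b i : (sq b <= i < sq b.+1)%N -> alt_vec b i ^ 2 = / INR (2 * b + 1).
Proof.
move=> Hi; have HN := INR_gt0 (2 * b + 1) ltac:(by rewrite addn1).
rewrite -pow2_abs alt_vec_abs // /= Rmult_1_r -Rinv_mult sqrt_sqrt //; lra.
Qed.

Lemma l2norm_test_vec b : l2norm (test_vec b) = 1.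
Proof.
rewrite /test_vec isometric_to_canon_of_block_orthogonal; last exact: block_orthogonal_ubasis.
rewrite /l2norm (Series_ext _ (fun k => trunc (alt_vec b) (sq b.+1) k ^ 2)); last first.
  by move=> k; rewrite lin_comb_canon.
rewrite (is_series_unique _ _ (is_series_trunc_sq _ _)) -sqrt_1; congr sqrt.
rewrite (psum_ext _ (fun i => alt_vec b i ^ 2)); last first.
  by move=> j Hj; rewrite /trunc; case: (Nat.ltb_spec j (sq b.+1)) => //; lia.
rewrite /psum (sum_nat_cat _ (sq b)); [| lia | by rewrite sq_succ leq_addr].
rewrite big_nat_cond big1 ?Rplus_0_l; last first.
  move=> i /andP [/andP [_ Hi] _]; rewrite alt_vec_out; first ring.
  by move=> E; have := block_of_spec i; rewrite E; lia.
rewrite (eq_big_nat _ _ (F2 := fun _ => / INR (2 * b + 1))); last first.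
  by move=> i Hi; rewrite alt_vec_sq.
rewrite sum_const_nat ?sq_succ ?addKn; last exact: leq_addr.
by field; apply: Rgt_not_eq; apply: INR_gt0; rewrite addn1.
Qed.

Lemma expands_test_vec b : expands ubasis (alt_vec b) (test_vec b).
Proof.
apply: (is_lim_seq_ext_loc (fun _ => 0)); last exact: is_lim_seq_const.
exists (sq b.+1) => n /leP Hn; symmetry.
have Hzero j : vsub (lin_comb ubasis (alt_vec b) n) (test_vec b) j = 0.
  rewrite /vsub /test_vec !lin_comb_sum (sum_nat_cat _ (sq b.+1) n) //.
  rewrite [X in _ + X - _]big_nat_cond [X in _ + X - _]big1; first ring.
  move=> i /andP [/andP [Hi _] _]; rewrite alt_vec_out ?Rmult_0_l // => E.
  by have := block_of_spec i; rewrite E; lia.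
rewrite /l2norm (Series_ext _ (fun _ => 0)); last by move=> j; rewrite Hzero; ring.
have Hz : is_series (fun _ : nat => 0) (psum (fun _ => 0) 0) by apply: is_series_finite_support.
by rewrite (is_series_unique _ _ Hz) psum0 sqrt_0.
Qed.

Lemma in_l2_test_vec b : in_l2 (test_vec b).
Proof.
exists (psum (fun k => test_vec b k ^ 2) (sq b.+1)).
by apply: is_series_finite_support => j Hj; rewrite test_vec_after //; ring.
Qed.

Lemma greedy_set_alt_vec b n : (n <= 2 * b + 1)%N ->
  greedy_set (alt_vec b) n (List.seq (sq b) n).
Proof.
move=> Hn; split; first exact: seq_NoDup.
split; first exact: length_seq.
move=> i j /in_seq Hi /in_seq Hj.
have Hib : (sq b <= i < sq b.+1)%N by rewrite sq_succ; apply/andP; lia.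
rewrite (alt_vec_abs b i Hib); have Hpos := alt_vec_abs_pos b.
case: (boolP (sq b <= j < sq b.+1)%N) => Hjb.
  by right; rewrite (alt_vec_abs b j Hjb); split => //; move: Hjb; rewrite sq_succ; lia.
left; rewrite alt_vec_out ?Rabs_R0 // => E.
by move: Hjb; rewrite -E block_of_spec.
Qed.

Lemma sqrt_harm_unbounded M : exists b, M < sqrt (harm b ^ 2 / 180).
Proof.
have [b Hb] := harm_unbounded (14 * Rabs M); exists b.
have HM := Rle_abs M; have HM0 := Rabs_pos M.
apply: Rle_lt_trans HM _; rewrite -[X in X < _](sqrt_pow2 _ HM0).
by apply: sqrt_lt_1_alt; split; nra.
Qed.

Theorem not_bibasic_ubasis : ~ bibasic ubasis.
Proof.
move=> [M [_ HM]]; have [b Hb] := sqrt_harm_unbounded M.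
have := HM (sq b.+1) (alt_vec b); rewrite -/(test_vec b) l2norm_test_vec Rmult_1_r.
suff : sqrt (harm b ^ 2 / 180) <= l2norm (sup_abs (lin_comb ubasis (alt_vec b)) (sq b.+1)).
  by lra.
apply: (l2norm_sup_abs_ge b _ _ (fun t => t + sq b)%N) => [n j Hj|t Ht].
  by apply: lin_comb_eq0 => i; exact: alt_vec_ubasis_after.
split; first by rewrite sq_succ; apply/andP; lia.
exact: lin_comb_diag.
Qed.

Theorem not_uniformly_quasi_greedy_ubasis : ~ uniformly_quasi_greedy ubasis.
Proof.
move=> [K HK]; have [b Hb] := sqrt_harm_unbounded K.
have := HK (2 * b + 1)%N (test_vec b) (alt_vec b) (fun n => List.seq (sq b) n)
  (in_l2_test_vec b) (expands_test_vec b) (l2norm_test_vec b).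
have Hgreedy n : (1 <= n)%coq_nat /\ (n <= 2 * b + 1)%coq_nat -> greedy_set (alt_vec b) n (List.seq (sq b) n).
  by move=> [_ /leP Hn]; exact: greedy_set_alt_vec.
move=> /(_ Hgreedy).
suff : sqrt (harm b ^ 2 / 180) <=
       l2norm (sup_abs (fun n => list_comb ubasis (alt_vec b) (List.seq (sq b) n)) (2 * b + 1)).
  by lra.
apply: (l2norm_sup_abs_ge b _ _ id) => [n j Hj|t Ht].
  by apply: list_comb_eq0 => i; exact: alt_vec_ubasis_after.
by split; [apply/andP; lia | exact: list_comb_diag].
Qed.

Theorem proposition4p3 :
  exists u : nat -> vec,
    is_basis u /\ isometric_to_canon u /\
    ~ bibasic u /\ ~ uniformly_quasi_greedy u.
Proof.
exists ubasis; split; first exact: is_basis_of_block_orthogonal block_orthogonal_ubasis.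
split; first exact: isometric_to_canon_of_block_orthogonal block_orthogonal_ubasis.
by split; [exact: not_bibasic_ubasis | exact: not_uniformly_quasi_greedy_ubasis].
Qed.
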